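(* Let $\mathcal K$ be a compact subset of $\mathcal L_{\mathbb C}$. Then for all $x\in\mathbf S^3$ and $w\in\mathcal K$, \[d_E(x,w^\perp)=\frac{|\langle x,w\rangle|}{\|x\|\,\|w\|},\] and there is a constant $C\ge1$ (depending only on $\mathcal K$) such that for all $x\in\mathbf S^3$, $w\in\mathcal K$, \[C^{-1}d_E(x,w^\perp)\le d_E(x,L_w)\le C\,d_E(x,w^\perp),\qquad C^{-1}d_E(x,L_w)\le d(x,L_w)\le C\,d_E(x,L_w).\]
   Context: On $\mathbb{C}^3$: $u\cdot v=\sum u_i\bar v_i$, $\|u\|=\sqrt{u\cdot u}$, $\langle u,v\rangle=u_0\bar v_0-u_1\bar v_1-u_2\bar v_2$, $q(u)=\langle u,u\rangle$, $\|u\wedge v\|^2=\|u\|^2\|v\|^2-|u\cdot v|^2$. On $\mathbb P^2_{\mathbb C}$, $d_E(u,v)=\|u\wedge v\|/(\|u\|\|v\|)$. $\mathbf S^3=\{u:q(u)=0\}$ with visual metric $d(u,v)=\sqrt{|\langle u,v\rangle|/(\|u\|\|v\|)}$. $\mathcal L_{\mathbb C}=\{w\in\mathbb P^2_{\mathbb C}:q(w)<0\}$ with metric $d_E$; $w^\perp=\{u\in\mathbb P^2_{\mathbb C}:\langle u,w\rangle=0\}$ and $L_w=w^\perp\cap\mathbf S^3$ is the associated chain. Distances to sets are infima over points of the set: $d_E(x,w^\perp)$ in $\mathbb P^2_{\mathbb C}$, $d_E(x,L_w)$ and $d(x,L_w)$ over $L_w$. *)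

From HB Require Import structures.
From mathcomp Require Import all_boot all_order all_algebra.
From mathcomp Require Import complex.
From mathcomp Require Import all_classical all_reals all_analysis.
Set Implicit Arguments. Unset Strict Implicit. Unset Printing Implicit Defensive.
Import Order.TTheory GRing.Theory Num.Theory.
Import numFieldNormedType.Exports.
Local Open Scope ring_scope.
Local Open Scope classical_set_scope.

Section Defs.
Variable R : realType.
Local Notation C := R[i].
(* vectors of C^3 are row vectors; a point of P^2_C is represented by any nonzero vector *)
Local Notation V := 'rV[C]_3.

Definition i0 : 'I_3 := inord 0.
Definition i1 : 'I_3 := inord 1.
Definition i2 : 'I_3 := inord 2.

Definition modc (z : C) : R := ComplexField.Normc.normc z.

Definition dotc (u v : V) : C := \sum_(i < 3) u ord0 i * (v ord0 i)^*%C.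
Definition normv (u : V) : R := Num.sqrt (complex.Re (dotc u u)).
Definition herm (u v : V) : C :=
  u ord0 i0 * (v ord0 i0)^*%C - u ord0 i1 * (v ord0 i1)^*%C
  - u ord0 i2 * (v ord0 i2)^*%C.
Definition qf (u : V) : C := herm u u.
Definition wedgen (u v : V) : R :=
  Num.sqrt (normv u ^+ 2 * normv v ^+ 2 - modc (dotc u v) ^+ 2).
Definition dE (u v : V) : R := wedgen u v / (normv u * normv v).
Definition dvis (u v : V) : R := Num.sqrt (modc (herm u v) / (normv u * normv v)).

Definition S3 : set V := [set u | u != 0 /\ qf u = 0].
Definition LC : set V := [set w | w != 0 /\ qf w < 0].
Definition perp (w : V) : set V := [set u | u != 0 /\ herm u w = 0].
Definition chain (w : V) : set V := perp w `&` S3.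

Definition dist_to (d : V -> V -> R) (x : V) (A : set V) : R :=
  inf [set d x y | y in A].

Definition dE_compact (K : set V) : Prop :=
  forall u : nat -> V, (forall n, K (u n)) ->
  exists phi : nat -> nat,
    {homo phi : m n / (m < n)%N >-> (m < n)%N} /\
    exists2 w, K w & (fun n : nat => dE (u (phi n)) w) @ \oo --> (0 : R).

End Defs.

(* Since <u,w> = u . Jw with J = diag(1,-1,-1), w^perp is the Euclidean orthogonal of Jw,
   and d_E(x, n^perp) = |x.n| / (|x||n|) is attained at the orthogonal projection of x, which
   is nonzero because q(x) = 0 while q(w) < 0.  For the chain, project x Hermitian-orthogonally
   to p in w^perp; the line through p and the Hermitian cross product v of w and p contains a
   null vector y = p + al v with |<x,y>| = |<x,w>|^2 / |q(w)| and
   |y|^2 >= |x|^2 - 2 |<x,w>| |x.w| / |q(w)|.  Compactness of K bounds |w|^2 / |q(w)| by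
   some M (as q(w) / |w|^2 is d_E-Lipschitz), so y lies within 4M d_E(x, w^perp) of x for
   both d_E and d.  The lower bounds come from L_w <= w^perp and from d_E <= 2 d on S^3. *)

From HB Require Import structures.
From mathcomp Require Import all_boot all_order all_algebra.
From mathcomp Require Import complex.
From mathcomp Require Import all_classical all_reals all_analysis.
From mathcomp Require Import ring lra.
Import Order.TTheory GRing.Theory Num.Theory.
Local Open Scope ring_scope.
Local Open Scope classical_set_scope.
Local Open Scope complex_scope.

Set Implicit Arguments. Unset Strict Implicit. Unset Printing Implicit Defensive.

Section ComplexModulus.
Variable R : realType.
Local Notation C := R[i].
Implicit Types (a b z : C) (r : R).

Lemma conjcD a b : (a + b)^*%C = a^*%C + b^*%C. Proof. exact: rmorphD. Qed.
Lemma conjcB a b : (a - b)^*%C = a^*%C - b^*%C. Proof. exact: rmorphB. Qed.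
Lemma conjcN a : (- a)^*%C = - a^*%C. Proof. exact: rmorphN. Qed.
Lemma conjcM a b : (a * b)^*%C = a^*%C * b^*%C. Proof. exact: rmorphM. Qed.
Lemma conjcV a : (a^-1)^*%C = (a^*%C)^-1. Proof. exact: conjc_inv. Qed.
Lemma conjcR r : (r%:C)^*%C = r%:C. Proof. exact: conjc_real. Qed.

Lemma modc_ge0 z : 0 <= modc z.
Proof. by case: z => a b; rewrite /modc /= sqrtr_ge0. Qed.

Lemma modc_sqr z : modc z ^+ 2 = complex.Re z ^+ 2 + complex.Im z ^+ 2.
Proof. by case: z => a b; rewrite /modc /= sqr_sqrtr // addr_ge0 ?sqr_ge0. Qed.

Lemma mulcJ z : z * z^*%C = (modc z ^+ 2)%:C.
Proof.
rewrite modc_sqr; case: z => a b /=.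
by apply/eqP; rewrite eq_complex /=; apply/andP; split; apply/eqP; ring.
Qed.

Lemma modcM a b : modc (a * b) = modc a * modc b.
Proof. exact: ComplexField.Normc.normcM. Qed.

Lemma modcV a : modc a^-1 = (modc a)^-1.
Proof. exact: ComplexField.Normc.normcV. Qed.

Lemma modcJ a : modc a^*%C = modc a.
Proof. by case: a => x y; rewrite /modc /= sqrrN. Qed.

Lemma modcN a : modc (- a) = modc a.
Proof. by case: a => x y; rewrite /modc /= !sqrrN. Qed.

Lemma modcR r : modc r%:C = `|r|.
Proof. by rewrite /modc /= expr0n /= addr0 sqrtr_sqr. Qed.

Lemma modc_eq0 a : (modc a == 0) = (a == 0).
Proof.
apply/eqP/eqP => [|->]; first exact: ComplexField.Normc.eq0_normc.
by rewrite -[0]/(0%:C) modcR normr0.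
Qed.

Lemma ler_modcD a b : modc (a + b) <= modc a + modc b.
Proof. exact: le_normcD. Qed.

Lemma lerB_modc a b : modc a - modc b <= modc (a - b).
Proof. by have := ler_modcD (a - b) b; rewrite subrK; lra. Qed.

Lemma ler_Re_modc z : complex.Re z <= modc z.
Proof.
have [Re_le0|Re_gt0] := lerP (complex.Re z) 0; first by have := modc_ge0 z; lra.
have Re_sqr_le : complex.Re z ^+ 2 <= modc z ^+ 2.
  by rewrite modc_sqr; have := sqr_ge0 (complex.Im z); lra.
by rewrite -(ler_pXn2r (n := 2)) ?nnegrE ?modc_ge0 // ltW.
Qed.

Lemma modc_sqr_le_sub a b c d :
  (modc a * modc b - modc c * modc d) ^+ 2 <= modc (a * b - c * d) ^+ 2.
Proof.
rewrite -!modcM -real_normK ?num_real // ler_pXn2r ?nnegrE ?modc_ge0 //.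
rewrite ler_norml lerB_modc andbT.
by have := lerB_modc (c * d) (a * b); rewrite -[c * d - a * b]opprB modcN; lra.
Qed.

End ComplexModulus.

Ltac conjc_simpl := rewrite ?(conjcD, conjcB, conjcN, conjcM, conjcV, conjcR, conjcK).

Section Vectors.
Variable R : realType.
Local Notation C := R[i].
Local Notation V := 'rV[C]_3.
Implicit Types (a c t : C) (u v w x y n : V).

Lemma ord3P (k : 'I_3) : [\/ k = i0, k = i1 | k = i2].
Proof.
by case: k => -[|[|[|//]]] lt_k; [constructor 1|constructor 2|constructor 3];
  apply/val_inj; rewrite /= inordK.
Qed.

Definition vec3 a b c : V := \row_(k < 3) nth 0 [:: a; b; c] k.

Lemma vec3_i0 a b c : vec3 a b c ord0 i0 = a. Proof. by rewrite mxE /= inordK. Qed.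
Lemma vec3_i1 a b c : vec3 a b c ord0 i1 = b. Proof. by rewrite mxE /= inordK. Qed.
Lemma vec3_i2 a b c : vec3 a b c ord0 i2 = c. Proof. by rewrite mxE /= inordK. Qed.
Definition vec3E := (vec3_i0, vec3_i1, vec3_i2).

Lemma dotcE u v : dotc u v =
  u ord0 i0 * (v ord0 i0)^*%C + u ord0 i1 * (v ord0 i1)^*%C + u ord0 i2 * (v ord0 i2)^*%C.
Proof.
rewrite /dotc !big_ord_recl big_ord0 addr0 addrA.
have -> : i0 = ord0 by apply/val_inj; rewrite /= inordK.
have -> : i1 = lift ord0 ord0 by apply/val_inj; rewrite /= inordK.
by have -> : i2 = lift ord0 (lift ord0 ord0) by apply/val_inj; rewrite /= inordK.
Qed.

Definition sqnorm u : R :=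
  modc (u ord0 i0) ^+ 2 + modc (u ord0 i1) ^+ 2 + modc (u ord0 i2) ^+ 2.

Lemma dotcc u : dotc u u = (sqnorm u)%:C.
Proof. by rewrite dotcE !mulcJ /sqnorm !rmorphD. Qed.

Lemma sqnorm_ge0 u : 0 <= sqnorm u.
Proof. by rewrite /sqnorm !addr_ge0 ?sqr_ge0. Qed.

Lemma sqnorm0 : sqnorm 0 = 0.
Proof. by rewrite /sqnorm !mxE -[0]/(0%:C) modcR normr0 expr0n /= !addr0. Qed.

Lemma sqnorm_eq0 u : (sqnorm u == 0) = (u == 0).
Proof.
apply/eqP/eqP => [|->]; last exact: sqnorm0.
rewrite /sqnorm => u_0; apply/rowP => k; rewrite mxE.
have coord0 j : modc (u ord0 j) ^+ 2 = 0 -> u ord0 j = 0.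
  by move/eqP; rewrite sqrf_eq0 modc_eq0 => /eqP.
have s0 := sqr_ge0 (modc (u ord0 i0)); have s1 := sqr_ge0 (modc (u ord0 i1)).
have s2 := sqr_ge0 (modc (u ord0 i2)).
by case: (ord3P k) => ->; apply: coord0; lra.
Qed.

Lemma sqnorm_gt0 u : u != 0 -> 0 < sqnorm u.
Proof. by rewrite lt0r sqnorm_eq0 sqnorm_ge0 => ->. Qed.

Lemma normvE u : normv u = Num.sqrt (sqnorm u).
Proof. by rewrite /normv dotcc. Qed.

Lemma normv_sqr u : normv u ^+ 2 = sqnorm u.
Proof. by rewrite normvE sqr_sqrtr // sqnorm_ge0. Qed.

Lemma normv_ge0 u : 0 <= normv u.
Proof. by rewrite normvE sqrtr_ge0. Qed.

Lemma normv_gt0 u : u != 0 -> 0 < normv u.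
Proof. by move=> u_neq0; rewrite normvE sqrtr_gt0 sqnorm_gt0. Qed.

Lemma dotcC u v : dotc v u = (dotc u v)^*%C.
Proof. by rewrite !dotcE; conjc_simpl; ring. Qed.

Lemma dotcDl u v w : dotc (u + v) w = dotc u w + dotc v w.
Proof. by rewrite !dotcE !mxE; ring. Qed.
Lemma dotcBl u v w : dotc (u - v) w = dotc u w - dotc v w.
Proof. by rewrite !dotcE !mxE; ring. Qed.
Lemma dotcZl a u w : dotc (a *: u) w = a * dotc u w.
Proof. by rewrite !dotcE !mxE; ring. Qed.
Lemma dotcDr u v w : dotc w (u + v) = dotc w u + dotc w v.
Proof. by rewrite !dotcE !mxE; conjc_simpl; ring. Qed.
Lemma dotcBr u v w : dotc w (u - v) = dotc w u - dotc w v.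
Proof. by rewrite !dotcE !mxE; conjc_simpl; ring. Qed.
Lemma dotcZr a u w : dotc w (a *: u) = a^*%C * dotc w u.
Proof. by rewrite !dotcE !mxE; conjc_simpl; ring. Qed.

Definition wedgev u v : V :=
  vec3 (u ord0 i0 * v ord0 i1 - u ord0 i1 * v ord0 i0)
       (u ord0 i0 * v ord0 i2 - u ord0 i2 * v ord0 i0)
       (u ord0 i1 * v ord0 i2 - u ord0 i2 * v ord0 i1).

Lemma sqnorm_wedgev u v :
  sqnorm (wedgev u v) = sqnorm u * sqnorm v - modc (dotc u v) ^+ 2.
Proof.
apply: complexI; rewrite [sqnorm (wedgev _ _)]/sqnorm /wedgev !vec3E.
rewrite raddfB !raddfD /= [(sqnorm u * _)%:C]rmorphM /= -!mulcJ -!dotcc !dotcE.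
by conjc_simpl; ring.
Qed.

Lemma modc_dotc_sqr_le u v : modc (dotc u v) ^+ 2 <= sqnorm u * sqnorm v.
Proof. by have := sqnorm_wedgev u v; have := sqnorm_ge0 (wedgev u v); lra. Qed.

Lemma modc_dotc_le u v : modc (dotc u v) <= normv u * normv v.
Proof.
rewrite -(ler_pXn2r (n := 2)) ?nnegrE ?modc_ge0 ?mulr_ge0 ?normv_ge0 //.
by rewrite exprMn !normv_sqr modc_dotc_sqr_le.
Qed.

Lemma dotc_wedgev x y n :
  dotc (wedgev x y) (wedgev n y) = dotc x n * dotc y y - dotc x y * dotc y n.
Proof. by rewrite /wedgev !dotcE !vec3E; conjc_simpl; ring. Qed.

Lemma dEE u v : dE u v = Num.sqrt (sqnorm (wedgev u v) / (sqnorm u * sqnorm v)).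
Proof.
rewrite /dE /wedgen !normv_sqr -sqnorm_wedgev !normvE.
by rewrite -sqrtrM ?sqnorm_ge0 // -sqrtrV ?mulr_ge0 ?sqnorm_ge0 // -sqrtrM ?sqnorm_ge0.
Qed.

Lemma dE_ge0 u v : 0 <= dE u v.
Proof. by rewrite dEE sqrtr_ge0. Qed.

Lemma dE_sqr u v : dE u v ^+ 2 = sqnorm (wedgev u v) / (sqnorm u * sqnorm v).
Proof. by rewrite dEE sqr_sqrtr // divr_ge0 ?mulr_ge0 ?sqnorm_ge0. Qed.

Lemma dE_le1 u v : u != 0 -> v != 0 -> dE u v <= 1.
Proof.
move=> u_neq0 v_neq0; rewrite -(ler_pXn2r (n := 2)) ?nnegrE ?dE_ge0 // expr1n.
rewrite dE_sqr ler_pdivrMr ?mul1r ?mulr_gt0 ?sqnorm_gt0 // sqnorm_wedgev.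
by have := sqr_ge0 (modc (dotc u v)); lra.
Qed.

End Vectors.

Section HermitianForm.
Variable R : realType.
Local Notation C := R[i].
Local Notation V := 'rV[C]_3.
Implicit Types (a c t : C) (u v w x y n p : V).

Definition jsign u : V := vec3 (u ord0 i0) (- u ord0 i1) (- u ord0 i2).

Lemma herm_dotc u w : herm u w = dotc u (jsign w).
Proof. by rewrite /herm dotcE /jsign !vec3E; conjc_simpl; ring. Qed.

Lemma sqnorm_jsign u : sqnorm (jsign u) = sqnorm u.
Proof. by rewrite /sqnorm /jsign !vec3E !modcN. Qed.

Lemma normv_jsign u : normv (jsign u) = normv u.
Proof. by rewrite !normvE sqnorm_jsign. Qed.

Lemma hermC u v : herm v u = (herm u v)^*%C.
Proof. by rewrite /herm; conjc_simpl; ring. Qed.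

Lemma hermDl u v w : herm (u + v) w = herm u w + herm v w.
Proof. by rewrite /herm !mxE; ring. Qed.
Lemma hermBl u v w : herm (u - v) w = herm u w - herm v w.
Proof. by rewrite /herm !mxE; ring. Qed.
Lemma hermZl a u w : herm (a *: u) w = a * herm u w.
Proof. by rewrite /herm !mxE; ring. Qed.
Lemma hermDr u v w : herm w (u + v) = herm w u + herm w v.
Proof. by rewrite /herm !mxE; conjc_simpl; ring. Qed.
Lemma hermZr a u w : herm w (a *: u) = a^*%C * herm w u.
Proof. by rewrite /herm !mxE; conjc_simpl; ring. Qed.

Definition qfr u : R :=
  modc (u ord0 i0) ^+ 2 - modc (u ord0 i1) ^+ 2 - modc (u ord0 i2) ^+ 2.

Lemma qfE u : qf u = (qfr u)%:C.
Proof. by rewrite /qf /herm !mulcJ /qfr !raddfB. Qed.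

Lemma qfr_sqnorm u : qfr u = 2 * modc (u ord0 i0) ^+ 2 - sqnorm u.
Proof. by rewrite /qfr /sqnorm; ring. Qed.

Lemma qfr_lt0 u : qf u < 0 -> qfr u < 0.
Proof. by rewrite qfE -ltcR. Qed.

Lemma qfr_eq0 u : qf u = 0 -> qfr u = 0.
Proof. by rewrite qfE => -[]. Qed.

Lemma qfZ c u : qf (c *: u) = (modc c ^+ 2)%:C * qf u.
Proof. by rewrite /qf hermZl hermZr -mulcJ; ring. Qed.

Lemma qf_jsign u : qf (jsign u) = qf u.
Proof. by rewrite /qf /herm /jsign !vec3E; conjc_simpl; ring. Qed.

Lemma modc_herm_le u v : modc (herm u v) <= normv u * normv v.
Proof. by rewrite herm_dotc -(normv_jsign v) modc_dotc_le. Qed.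

Lemma dvis_ge0 u v : 0 <= dvis u v.
Proof. exact: sqrtr_ge0. Qed.

Lemma dvis_sqr u v : dvis u v ^+ 2 = modc (herm u v) / (normv u * normv v).
Proof. by rewrite sqr_sqrtr // divr_ge0 ?modc_ge0 ?mulr_ge0 ?normv_ge0. Qed.

Lemma dvis_le1 u v : u != 0 -> v != 0 -> dvis u v <= 1.
Proof.
move=> u_neq0 v_neq0; rewrite -sqrtr1 ler_sqrt // ler_pdivrMr ?mul1r.
  exact: modc_herm_le.
by rewrite mulr_gt0 ?normv_gt0.
Qed.

End HermitianForm.

Section DistanceToSet.
Variable R : realType.
Local Notation V := 'rV[R[i]]_3.
Variable d : V -> V -> R.
Hypothesis d_ge0 : forall u v, 0 <= d u v.
Implicit Types (x y : V) (A B : set V).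

Lemma dist_to_le x A y : A y -> dist_to d x A <= d x y.
Proof. by move=> Ay; apply: ge_inf; [exists 0 => _ [z _ <-] | exists y]. Qed.

Lemma dist_to_ge x A c :
  A !=set0 -> (forall y, A y -> c <= d x y) -> c <= dist_to d x A.
Proof.
by move=> [y Ay] c_le; apply: lb_le_inf; [exists (d x y), y | move=> _ [z Az <-]; apply: c_le].
Qed.

Lemma dist_to_ge0 x A : 0 <= dist_to d x A.
Proof.
have [->|/set0P A_neq0] := eqVneq A set0; first by rewrite /dist_to image_set0 inf0.
by apply: (dist_to_ge A_neq0) => y _; apply: d_ge0.
Qed.

Lemma dist_to_attained x A y :
  A y -> (forall z, A z -> d x y <= d x z) -> dist_to d x A = d x y.
Proof.
by move=> Ay y_min; apply/eqP; rewrite eq_le dist_to_le //= dist_to_ge //; exists y.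
Qed.

Lemma le_dist_to_subset x A B :
  A `<=` B -> A !=set0 -> dist_to d x B <= dist_to d x A.
Proof. by move=> AB A_neq0; apply: dist_to_ge => // y /AB; apply: dist_to_le. Qed.

End DistanceToSet.

Lemma dist_to_le_scale (R : realType) (d d' : 'rV[R[i]]_3 -> 'rV[R[i]]_3 -> R) (k : R) x A :
  (forall u v, 0 <= d u v) ->
  0 < k -> A !=set0 -> (forall y, A y -> d x y <= k * d' x y) ->
  dist_to d x A <= k * dist_to d' x A.
Proof.
move=> d_ge0 k_gt0 A_neq0 d_le; rewrite -ler_pdivrMl //; apply: dist_to_ge => // y Ay.
by rewrite ler_pdivrMl //; apply: le_trans (dist_to_le d_ge0 _ Ay) (d_le y Ay).
Qed.

Section EuclideanHyperplane.
Variable R : realType.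
Local Notation C := R[i].
Local Notation V := 'rV[C]_3.
Implicit Types (c : C) (x y n : V).

Definition eproj x n : V := x - (dotc x n / (sqnorm n)%:C) *: n.

Lemma dotc_ratio_sqr x n :
  (modc (dotc x n) / (normv x * normv n)) ^+ 2
  = modc (dotc x n) ^+ 2 / (sqnorm x * sqnorm n).
Proof. by rewrite expr_div_n exprMn !normv_sqr. Qed.

Lemma dotc_ratio_ge0 x n : 0 <= modc (dotc x n) / (normv x * normv n).
Proof. by rewrite divr_ge0 ?modc_ge0 ?mulr_ge0 ?normv_ge0. Qed.

(* Binet-Cauchy: as y.n = 0, Cauchy-Schwarz for x /\ y and n /\ y reads
   |x.n|^2 |y|^4 <= |x /\ y|^2 |n|^2 |y|^2. *)
Lemma dE_ge_orth x n y : x != 0 -> n != 0 -> y != 0 -> dotc y n = 0 ->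
  modc (dotc x n) / (normv x * normv n) <= dE x y.
Proof.
move=> x_neq0 n_neq0 y_neq0 yn0.
have ny0 : dotc n y = 0 by rewrite dotcC yn0 conjc0.
have := modc_dotc_sqr_le (wedgev x y) (wedgev n y).
rewrite dotc_wedgev yn0 mulr0 subr0 dotcc modcM modcR ger0_norm ?sqnorm_ge0 //.
rewrite [sqnorm (wedgev n y)]sqnorm_wedgev ny0 -[0]/(0%:C) modcR normr0 expr0n /= subr0 => CS.
have y_gt0 := sqnorm_gt0 y_neq0.
have x_gt0 := sqnorm_gt0 x_neq0; have n_gt0 := sqnorm_gt0 n_neq0.
rewrite -(ler_pXn2r (n := 2)) ?nnegrE ?dotc_ratio_ge0 ?dE_ge0 // dotc_ratio_sqr dE_sqr.
rewrite ler_pdivrMr ?mulr_gt0 // mulrAC ler_pdivlMr ?mulr_gt0 //.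
rewrite -(ler_pM2r y_gt0); move: CS; rewrite exprMn; nra.
Qed.

Section Projection.
Variables x n : V.
Hypotheses (x_neq0 : x != 0) (n_neq0 : n != 0).
Let c := dotc x n / (sqnorm n)%:C.
Let sqnorm_n_neq0 : (sqnorm n)%:C != 0.
Proof. by rewrite eq_complex /= sqnorm_eq0 (negbTE n_neq0). Qed.

Lemma dotc_eproj : dotc (eproj x n) n = 0.
Proof. by rewrite dotcBl dotcZl dotcc /c mulfVK // subrr. Qed.

Lemma dotc_eproj_self :
  dotc (eproj x n) (eproj x n) = (sqnorm x - modc (dotc x n) ^+ 2 / sqnorm n)%:C.
Proof.
have nproj0 : dotc n (eproj x n) = 0 by rewrite dotcC dotc_eproj conjc0.
rewrite [in LHS]/eproj dotcBl dotcZl nproj0 mulr0 subr0.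
rewrite dotcBr dotcZr dotcc /c conjcM conjcV conjcR mulrAC [_^*%C * _]mulrC mulcJ.
by rewrite raddfB /= fmorph_div.
Qed.

Lemma dE_eproj : eproj x n != 0 ->
  dE x (eproj x n) = modc (dotc x n) / (normv x * normv n).
Proof.
move=> proj_neq0.
set beta := sqnorm x - modc (dotc x n) ^+ 2 / sqnorm n.
have sqnorm_proj : sqnorm (eproj x n) = beta by apply: complexI; rewrite -dotcc dotc_eproj_self.
have x_proj : dotc x (eproj x n) = beta%:C.
  have nproj0 : dotc n (eproj x n) = 0 by rewrite dotcC dotc_eproj conjc0.
  by rewrite -dotc_eproj_self [in RHS]/eproj dotcBl dotcZl nproj0 mulr0 subr0.
have beta_gt0 : 0 < beta by rewrite -sqnorm_proj sqnorm_gt0.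
have x_gt0 := sqnorm_gt0 x_neq0; have n_gt0 := sqnorm_gt0 n_neq0.
apply/eqP; rewrite -(eqrXn2 (n := 2)) ?dE_ge0 ?dotc_ratio_ge0 // dotc_ratio_sqr dE_sqr.
rewrite sqnorm_wedgev sqnorm_proj x_proj modcR ger0_norm ?ltW //.
have beta_n : sqnorm x * sqnorm n - modc (dotc x n) ^+ 2 = beta * sqnorm n.
  by rewrite /beta; field; rewrite gt_eqF.
by apply/eqP; rewrite /beta; field; rewrite beta_n !gt_eqF ?mulr_gt0.
Qed.

End Projection.

Lemma dist_to_eorth x n : x != 0 -> n != 0 -> eproj x n != 0 ->
  dist_to (@dE R) x [set y | y != 0 /\ dotc y n = 0]
  = modc (dotc x n) / (normv x * normv n).
Proof.
move=> x_neq0 n_neq0 proj_neq0; rewrite -dE_eproj //.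
apply: dist_to_attained; [exact: dE_ge0 | by split; last exact: dotc_eproj|].
by move=> y [y_neq0 yn0]; rewrite dE_eproj // dE_ge_orth.
Qed.

End EuclideanHyperplane.

Lemma dist_to_perp (R : realType) (x w : 'rV[R[i]]_3) : S3 x -> LC w ->
  dist_to (@dE R) x (perp w) = modc (herm x w) / (normv x * normv w).
Proof.
move=> [x_neq0 qx0] [w_neq0 qw_lt0].
have perpE : perp w = [set y | y != 0 /\ dotc y (jsign w) = 0].
  by apply/funext => y; rewrite /perp /= herm_dotc.
have jw_neq0 : jsign w != 0 by rewrite -sqnorm_eq0 sqnorm_jsign sqnorm_eq0.
rewrite perpE herm_dotc -(normv_jsign w) dist_to_eorth //.
apply/eqP => /subr0_eq x_eq; move: qx0 x_neq0; rewrite x_eq qfZ qf_jsign => /eqP.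
rewrite mulf_eq0 (lt_eqF qw_lt0) orbF eq_complex /= eqxx andbT sqrf_eq0 modc_eq0.
by move=> /eqP ->; rewrite scale0r eqxx.
Qed.

Section NullPoints.
Variable R : realType.
Local Notation C := R[i].
Local Notation V := 'rV[C]_3.
Implicit Types (a c t : C) (u v w x y p : V).

Lemma sqnorm_addZ u a v : sqnorm (u + a *: v)
  = sqnorm u + 2 * complex.Re (a^*%C * dotc u v) + modc a ^+ 2 * sqnorm v.
Proof.
apply: complexI; rewrite -dotcc [RHS]rmorphD [in X in _ = X + _]rmorphD /=.
rewrite rmorphM rmorphM /= rmorph_nat -addcJ -mulcJ -!dotcc.
by rewrite dotcDl !dotcDr !dotcZl !dotcZr (dotcC v u); conjc_simpl; ring.
Qed.

Lemma qf_addZ_orth u a v : herm u v = 0 ->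
  qf (u + a *: v) = qf u + (modc a ^+ 2)%:C * qf v.
Proof.
move=> uv0; have vu0 : herm v u = 0 by rewrite hermC uv0 conjc0.
by rewrite /qf hermDl !hermDr !hermZl !hermZr uv0 vu0 -mulcJ; ring.
Qed.

(* The conjugate of the ordinary cross product of J w and J p, with J = diag(1,-1,-1). *)
Definition hcross w p : V :=
  vec3 (w ord0 i1 * p ord0 i2 - w ord0 i2 * p ord0 i1)^*%C
       (w ord0 i0 * p ord0 i2 - w ord0 i2 * p ord0 i0)^*%C
       (w ord0 i1 * p ord0 i0 - w ord0 i0 * p ord0 i1)^*%C.

Lemma herm_hcrossl w p : herm (hcross w p) w = 0.
Proof. by rewrite /herm /hcross !vec3E; conjc_simpl; ring. Qed.

Lemma herm_hcrossr w p : herm (hcross w p) p = 0.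
Proof. by rewrite /herm /hcross !vec3E; conjc_simpl; ring. Qed.

Lemma qf_hcross w p : qf (hcross w p) = qf w * qf p - herm w p * herm p w.
Proof. by rewrite /qf /herm /hcross !vec3E; conjc_simpl; ring. Qed.

Lemma null_point_on_line p v : herm p v = 0 -> 0 <= qfr p ->
  (qfr p = 0 \/ qfr v < 0) ->
  exists2 al : R, qf (p + al%:C *: v) = 0 & sqnorm p <= sqnorm (p + al%:C *: v).
Proof.
move=> pv0 qp_ge0 [qp0|qv_lt0].
  by exists 0; rewrite scale0r addr0 // qfE qp0.
pose e : R := if 0 <= complex.Re (dotc p v) then 1 else -1.
have e_Re : 0 <= e * complex.Re (dotc p v).
  rewrite /e; case: ifPn => [|/negbTE]; rewrite ?mul1r // mulN1r oppr_ge0.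
  by move/negbT; rewrite -ltNge => /ltW.
have e_sqr : e ^+ 2 = 1 by rewrite /e; case: ifP; rewrite ?sqrrN expr1n.
have ratio_ge0 : 0 <= qfr p / - qfr v by rewrite divr_ge0 // oppr_ge0 ltW.
exists (e * Num.sqrt (qfr p / - qfr v)).
  rewrite qf_addZ_orth // !qfE modcR real_normK ?num_real // exprMn e_sqr mul1r.
  rewrite sqr_sqrtr // -!rmorphM -rmorphD /=; congr (_%:C).
  by field; rewrite lt_eqF.
rewrite sqnorm_addZ conjcR -addrA lerDl addr_ge0 ?mulr_ge0 ?modc_ge0 ?sqnorm_ge0 //.
have -> : complex.Re ((e * Num.sqrt (qfr p / - qfr v))%:C * dotc p v)
         = Num.sqrt (qfr p / - qfr v) * (e * complex.Re (dotc p v)).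
  by case: (dotc p v) => ? ? /=; ring.
by rewrite mulr_ge0 ?sqrtr_ge0.
Qed.

End NullPoints.

Section ChainPointConstruction.
Variable R : realType.
Local Notation C := R[i].
Local Notation V := 'rV[C]_3.
Variables x w : V.
Hypotheses (Sx : S3 x) (Lw : LC w).

Let qw_lt0 : qfr w < 0. Proof. exact: qfr_lt0 Lw.2. Qed.
Let qw_neq0 : qf w != 0. Proof. by rewrite qfE eq_complex /= lt_eqF. Qed.

Let t := herm x w / qf w.
Let p := x - t *: w.

Let x_decomp : x = p + t *: w. Proof. by rewrite subrK. Qed.

Let herm_p_w : herm p w = 0.
Proof. by rewrite hermBl hermZl /t -/(qf w) divfK ?subrr. Qed.

Let herm_w_p : herm w p = 0.
Proof. by rewrite hermC herm_p_w conjc0. Qed.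

Let modc_t : modc t = modc (herm x w) / - qfr w.
Proof. by rewrite /t modcM modcV qfE modcR ltr0_norm. Qed.

Let qfr_p : qfr p = modc (herm x w) ^+ 2 / - qfr w.
Proof.
have := qf_addZ_orth t herm_p_w; rewrite -x_decomp Sx.2 !qfE modc_t => /esym.
rewrite -rmorphM -rmorphD /= => /(congr1 (@complex.Re R)) /= qsum.
by rewrite -[qfr p]subr0 -qsum; field; rewrite lt_eqF.
Qed.

Let p_neq0 : p != 0.
Proof.
apply: contraTneq Sx.1 => p0; rewrite negbK.
have := qfZ t w; rewrite -[t *: w]add0r -p0 -x_decomp Sx.2 => /esym/eqP.
rewrite mulf_eq0 (negbTE qw_neq0) orbF eq_complex /= eqxx andbT.
by rewrite sqrf_eq0 modc_eq0 => /eqP t0; rewrite x_decomp t0 scale0r addr0 p0.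
Qed.

Let sqnorm_p_ge :
  sqnorm x - 2 * (modc (herm x w) * modc (dotc x w) / - qfr w) <= sqnorm p.
Proof.
have Re_ge : - (modc (herm x w) * modc (dotc x w) / - qfr w)
             <= complex.Re (- (t^*%C * dotc x w)).
  rewrite mulrAC -modc_t -modcJ -modcM.
  by case: (t^*%C * dotc x w) => a b /=; rewrite lerN2 -[a]/(complex.Re (a +i* b)) ler_Re_modc.
have := mulr_ge0 (sqr_ge0 (modc (- t))) (sqnorm_ge0 w).
rewrite /p -(scaleNr t w) sqnorm_addZ conjcN mulNr; lra.
Qed.

Lemma exists_chain_point : exists2 y, chain w y &
  modc (herm x y) * - qfr w = modc (herm x w) ^+ 2 /\
  sqnorm x - 2 * (modc (herm x w) * modc (dotc x w) / - qfr w) <= sqnorm y.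
Proof.
set v := hcross w p.
have herm_v_w : herm v w = 0 by apply: herm_hcrossl.
have herm_w_v : herm w v = 0 by rewrite hermC herm_v_w conjc0.
have herm_p_v : herm p v = 0 by rewrite hermC herm_hcrossr conjc0.
have qfr_p_ge0 : 0 <= qfr p by rewrite qfr_p divr_ge0 ?sqr_ge0 // oppr_ge0 ltW.
have qfr_v : qfr v = qfr w * qfr p.
  by apply: complexI; rewrite -qfE qf_hcross herm_w_p mul0r subr0 !qfE rmorphM.
have [al qy sqnorm_le] : exists2 al : R, qf (p + al%:C *: v) = 0 &
    sqnorm p <= sqnorm (p + al%:C *: v).
  apply: null_point_on_line => //; have [->|qp_neq0] := eqVneq (qfr p) 0; first by left.
  by right; rewrite qfr_v pmulr_llt0 // lt0r qp_neq0.
have y_neq0 : p + al%:C *: v != 0.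
  by rewrite -sqnorm_eq0 gt_eqF // (lt_le_trans (sqnorm_gt0 p_neq0) sqnorm_le).
exists (p + al%:C *: v).
  by split; split; rewrite // hermDl hermZl herm_p_w herm_v_w mulr0 addr0.
have -> : herm x (p + al%:C *: v) = (qfr p)%:C.
  rewrite {1}x_decomp hermDl !(hermDr p (al%:C *: v)) !hermZl !hermZr.
  by rewrite herm_w_p herm_p_v herm_w_v -/(qf p) qfE; ring.
rewrite modcR ger0_norm // qfr_p divfK ?oppr_eq0 ?lt_eqF //; split => //.
exact: le_trans sqnorm_p_ge sqnorm_le.
Qed.

End ChainPointConstruction.

Section VisualMetric.
Variable R : realType.
Local Notation C := R[i].
Local Notation V := 'rV[C]_3.
Implicit Types (x y : V).

Lemma modcD_sqr_gap (A s : C) : modc s <= modc A ->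
  4 * modc A ^+ 2 - modc (A + s) ^+ 2 <= 6 * modc A * modc (A - s).
Proof.
move=> s_le_A.
have parallelogram : modc (A + s) ^+ 2 + modc (A - s) ^+ 2
                     = 2 * modc A ^+ 2 + 2 * modc s ^+ 2.
  apply: complexI; rewrite rmorphD [RHS]rmorphD !(rmorphM _ 2) /= rmorph_nat -!mulcJ.
  by conjc_simpl; ring.
have r_le : modc (A - s) <= modc A + modc s by rewrite -(modcN s) ler_modcD.
have r_ge := lerB_modc A s.
have := modc_ge0 s; nra.
Qed.

Lemma S3_sqnorm x : S3 x -> sqnorm x = 2 * modc (x ord0 i0) ^+ 2.
Proof. by move=> [_ /qfr_eq0]; rewrite qfr_sqnorm; lra. Qed.

Lemma dE_sqr_le_dvis_sqr x y : S3 x -> S3 y -> dE x y ^+ 2 <= 3 * dvis x y ^+ 2.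
Proof.
move=> Sx Sy.
set A := x ord0 i0 * (y ord0 i0)^*%C.
set s := x ord0 i1 * (y ord0 i1)^*%C + x ord0 i2 * (y ord0 i2)^*%C.
have dotc_xy : dotc x y = A + s by rewrite dotcE /A /s addrA.
have herm_xy : herm x y = A - s by rewrite /herm /A /s opprD addrA.
set m := modc A.
have m_eq : m = modc (x ord0 i0) * modc (y ord0 i0) by rewrite /m modcM modcJ.
have m_gt0 : 0 < m.
  rewrite m_eq mulr_gt0 // lt0r modc_ge0 andbT; apply/negP => /eqP coord0.
    by have := sqnorm_gt0 Sx.1; rewrite S3_sqnorm // coord0 expr0n /= mulr0 ltxx.
  by have := sqnorm_gt0 Sy.1; rewrite S3_sqnorm // coord0 expr0n /= mulr0 ltxx.
have sqnorm_xy : sqnorm x * sqnorm y = 4 * m ^+ 2.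
  by rewrite !S3_sqnorm // m_eq; ring.
have normv_xy : normv x * normv y = 2 * m.
  rewrite !normvE -sqrtrM ?sqnorm_ge0 // sqnorm_xy.
  have -> : 4 * m ^+ 2 = (2 * m) ^+ 2 by ring.
  by rewrite sqrtr_sqr ger0_norm // mulr_ge0 // ltW.
have s_le_m : modc s <= m.
  pose tail (u : V) := vec3 0 (u ord0 i1) (u ord0 i2).
  have sqnorm_tail u : S3 u -> sqnorm (tail u) = modc (u ord0 i0) ^+ 2.
    move=> Su; rewrite /sqnorm !vec3E -[0]/(0%:C) modcR normr0 expr0n /= add0r.
    by have := S3_sqnorm Su; rewrite /sqnorm; lra.
  have := modc_dotc_sqr_le (tail x) (tail y).
  rewrite !sqnorm_tail // dotcE !vec3E mul0r add0r -/s -exprMn -m_eq.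
  by rewrite ler_pXn2r // nnegrE ?modc_ge0 // ltW.
rewrite dE_sqr dvis_sqr sqnorm_wedgev sqnorm_xy dotc_xy herm_xy normv_xy.
rewrite ler_pdivrMr ?mulr_gt0 ?exprn_gt0 //.
have -> : 3 * (modc (A - s) / (2 * m)) * (4 * m ^+ 2) = 6 * m * modc (A - s).
  by field; rewrite gt_eqF.
exact: modcD_sqr_gap s_le_m.
Qed.

Lemma dE_le_2dvis x y : S3 x -> S3 y -> dE x y <= 2 * dvis x y.
Proof.
move=> Sx Sy; rewrite -(ler_pXn2r (n := 2)) ?nnegrE ?dE_ge0 ?mulr_ge0 ?dvis_ge0 //.
rewrite [(2 * _) ^+ 2]exprMn; have := dE_sqr_le_dvis_sqr Sx Sy; have := sqr_ge0 (dvis x y).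
lra.
Qed.

Lemma dvis_sqr_le x y (b : R) : x != 0 ->
  modc (herm x y) <= b * sqnorm x -> sqnorm x <= 2 * sqnorm y -> dvis x y ^+ 2 <= 2 * b.
Proof.
move=> x_neq0 herm_le y_ge; have x_gt0 := sqnorm_gt0 x_neq0.
have normv_ge : sqnorm x / 2 <= normv x * normv y.
  rewrite -(ler_pXn2r (n := 2)) ?nnegrE ?mulr_ge0 ?normv_ge0 ?divr_ge0 ?ltW //.
  by rewrite [(normv x * _) ^+ 2]exprMn !normv_sqr; nra.
have b_ge0 : 0 <= b by rewrite -(pmulr_lge0 _ x_gt0) (le_trans (modc_ge0 _) herm_le).
rewrite dvis_sqr ler_pdivrMr; last by apply: lt_le_trans normv_ge; rewrite divr_gt0.
by apply: (le_trans herm_le); have := ler_wpM2l b_ge0 normv_ge; lra.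
Qed.

End VisualMetric.

Section ChainPointEstimate.
Variable R : realType.
Local Notation V := 'rV[R[i]]_3.
Variables (M : R) (x w : V).
Hypotheses (M_ge1 : 1 <= M) (Sx : S3 x) (Lw : LC w)
  (w_bound : sqnorm w <= M * - qfr w).

Let a := modc (herm x w) / (normv x * normv w).

Let normv_xw_gt0 : 0 < normv x * normv w.
Proof. by rewrite mulr_gt0 ?normv_gt0 ?Sx.1 ?Lw.1. Qed.

Let herm_xw : modc (herm x w) = a * (normv x * normv w).
Proof. by rewrite /a divfK ?gt_eqF. Qed.

Let sqnorm_xw_le : sqnorm x * sqnorm w <= M * - qfr w * sqnorm x.
Proof. by rewrite [_ * sqnorm w]mulrC ler_pM2r ?sqnorm_gt0 ?Sx.1. Qed.

Lemma exists_near_chain_point : exists2 y, chain w y &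
  dE x y <= 4 * M * a /\ dvis x y <= 4 * M * a.
Proof.
have [y Ly [herm_xy sqnorm_y]] := exists_chain_point Sx Lw.
have a_ge0 : 0 <= a by rewrite divr_ge0 ?modc_ge0 ?ltW.
have [a_large|a_small] := lerP 1 (4 * M * a).
  exists y => //; split; apply: le_trans a_large.
    by apply: dE_le1; [case: Sx | case: Ly => -[]].
  by apply: dvis_le1; [case: Sx | case: Ly => -[]].
have q_gt0 : 0 < - qfr w by rewrite oppr_gt0 qfr_lt0 ?Lw.2.
have sqnorm_xw : (normv x * normv w) ^+ 2 = sqnorm x * sqnorm w by rewrite exprMn !normv_sqr.
have herm_le : modc (herm x y) <= M * a ^+ 2 * sqnorm x.
  rewrite -(ler_pM2r q_gt0) herm_xy herm_xw exprMn sqnorm_xw.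
  by have := ler_wpM2l (sqr_ge0 a) sqnorm_xw_le; lra.
have sqnorm_le : sqnorm x <= 2 * sqnorm y.
  have herm_dotc_le : modc (herm x w) * modc (dotc x w) <= M * a * sqnorm x * - qfr w.
    have aH_ge0 : 0 <= a * (normv x * normv w) := mulr_ge0 a_ge0 (ltW normv_xw_gt0).
    have := ler_wpM2l aH_ge0 (modc_dotc_le x w).
    have := ler_wpM2l a_ge0 sqnorm_xw_le; rewrite herm_xw -sqnorm_xw; lra.
  move: sqnorm_y; rewrite -(ler_pdivrMr _ _ q_gt0) in herm_dotc_le.
  by have := sqnorm_ge0 x; nra.
have dvis_sqr_le2 := dvis_sqr_le Sx.1 herm_le sqnorm_le.
have Ma_ge0 : 0 <= 4 * M * a by apply: mulr_ge0 a_ge0; have := M_ge1; lra.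
have M_sqr : 6 * M <= 16 * M ^+ 2 by have := M_ge1; nra.
move: (ler_wpM2r (sqr_ge0 a) M_sqr) (dE_sqr_le_dvis_sqr Sx Ly.2) (sqr_ge0 (dvis x y)).
move=> Ma_sqr dE_le dvis_sqr_ge0.
exists y => //; split; rewrite -(ler_pXn2r (n := 2)) ?nnegrE ?dE_ge0 ?dvis_ge0 //; lra.
Qed.

End ChainPointEstimate.

Section QuadraticFormRatio.
Variable R : realType.
Local Notation V := 'rV[R[i]]_3.
Implicit Types (u w : V).

Lemma sqr_cross_diff_le (p q1 q2 r s1 s2 : R) :
  (p ^+ 2 * (r ^+ 2 + s1 ^+ 2 + s2 ^+ 2) - r ^+ 2 * (p ^+ 2 + q1 ^+ 2 + q2 ^+ 2)) ^+ 2
  <= 2 * ((p * s1 - q1 * r) ^+ 2 + (p * s2 - q2 * r) ^+ 2)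
       * ((p ^+ 2 + q1 ^+ 2 + q2 ^+ 2) * (r ^+ 2 + s1 ^+ 2 + s2 ^+ 2)).
Proof.
set d1 := p * s1 - q1 * r; set d2 := p * s2 - q2 * r.
set f1 := p * s1 + q1 * r; set f2 := p * s2 + q2 * r.
have -> : p ^+ 2 * (r ^+ 2 + s1 ^+ 2 + s2 ^+ 2) - r ^+ 2 * (p ^+ 2 + q1 ^+ 2 + q2 ^+ 2)
          = d1 * f1 + d2 * f2 by rewrite /d1 /d2 /f1 /f2; ring.
have CS : (d1 * f1 + d2 * f2) ^+ 2 <= (d1 ^+ 2 + d2 ^+ 2) * (f1 ^+ 2 + f2 ^+ 2).
  by have := sqr_ge0 (d1 * f2 - d2 * f1); lra.
have f_le : f1 ^+ 2 + f2 ^+ 2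
            <= 2 * ((p ^+ 2 + q1 ^+ 2 + q2 ^+ 2) * (r ^+ 2 + s1 ^+ 2 + s2 ^+ 2)).
  have := sqr_ge0 d1; have := sqr_ge0 d2.
  have := mulr_ge0 (sqr_ge0 p) (sqr_ge0 r); have := mulr_ge0 (sqr_ge0 q1) (sqr_ge0 s1).
  have := mulr_ge0 (sqr_ge0 q1) (sqr_ge0 s2); have := mulr_ge0 (sqr_ge0 q2) (sqr_ge0 s1).
  have := mulr_ge0 (sqr_ge0 q2) (sqr_ge0 s2); rewrite /d1 /d2 /f1 /f2; nra.
have := ler_wpM2l (addr_ge0 (sqr_ge0 d1) (sqr_ge0 d2)) f_le; lra.
Qed.

Lemma qfr_ratio_lipschitz u w : u != 0 -> w != 0 ->
  `|qfr u / sqnorm u - qfr w / sqnorm w| <= 3 * dE u w.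
Proof.
move=> u_neq0 w_neq0; have u_gt0 := sqnorm_gt0 u_neq0; have w_gt0 := sqnorm_gt0 w_neq0.
have dE3_ge0 : 0 <= 3 * dE u w by exact: mulr_ge0 _ (dE_ge0 u w).
rewrite -(ler_pXn2r (n := 2)) ?nnegrE // real_normK ?num_real //.
rewrite [(3 * _) ^+ 2]exprMn dE_sqr.
have wedge_ge : (modc (u ord0 i0) * modc (w ord0 i1) - modc (u ord0 i1) * modc (w ord0 i0)) ^+ 2
    + (modc (u ord0 i0) * modc (w ord0 i2) - modc (u ord0 i2) * modc (w ord0 i0)) ^+ 2
    <= sqnorm (wedgev u w).
  rewrite /sqnorm /wedgev !vec3E.
  have := sqr_ge0 (modc (u ord0 i1 * w ord0 i2 - u ord0 i2 * w ord0 i1)).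
  by have := modc_sqr_le_sub (u ord0 i0) (w ord0 i1) (u ord0 i1) (w ord0 i0);
     have := modc_sqr_le_sub (u ord0 i0) (w ord0 i2) (u ord0 i2) (w ord0 i0); lra.
have := sqr_cross_diff_le (modc (u ord0 i0)) (modc (u ord0 i1)) (modc (u ord0 i2))
  (modc (w ord0 i0)) (modc (w ord0 i1)) (modc (w ord0 i2)).
rewrite !qfr_sqnorm -/(sqnorm u) -/(sqnorm w) => cross_le.
have -> : (2 * modc (u ord0 i0) ^+ 2 - sqnorm u) / sqnorm u
          - (2 * modc (w ord0 i0) ^+ 2 - sqnorm w) / sqnorm w
        = 2 * (modc (u ord0 i0) ^+ 2 * sqnorm w - modc (w ord0 i0) ^+ 2 * sqnorm u)
          / (sqnorm u * sqnorm w).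
  by field; rewrite !gt_eqF.
rewrite expr_div_n exprMn ler_pdivrMr ?exprn_gt0 ?mulr_gt0 //.
have -> : 3 ^+ 2 * (sqnorm (wedgev u w) / (sqnorm u * sqnorm w)) * (sqnorm u * sqnorm w) ^+ 2
        = 9 * sqnorm (wedgev u w) * (sqnorm u * sqnorm w).
  by field; rewrite !gt_eqF.
have uw_gt0 : 0 < sqnorm u * sqnorm w by rewrite mulr_gt0.
have := ler_wpM2r (ltW uw_gt0) wedge_ge; rewrite /sqnorm in cross_le *; nra.
Qed.

End QuadraticFormRatio.

Section CompactBound.
Variable R : realType.
Local Notation V := 'rV[R[i]]_3.

Lemma dE_compact_pos_lb (K : set V) (h : V -> R) (L : R) :
  dE_compact K -> 0 <= L ->
  (forall u w, K u -> K w -> `|h u - h w| <= L * dE u w) ->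
  (forall w, K w -> 0 < h w) ->
  exists2 e : R, 0 < e & forall w, K w -> e <= h w.
Proof.
move=> Kc L_ge0 h_lip h_gt0; apply: contrapT => no_lb.
have small n : exists u, K u /\ h u < n.+1%:R^-1.
  apply: contrapT => not_small; apply: no_lb; exists n.+1%:R^-1 => // w Kw.
  by rewrite leNgt; apply/negP => hw; apply: not_small; exists w.
have [u uP] := choice small.
have [phi [phi_incr [w Kw dE_cvg]]] := Kc u (fun n => (uP n).1).
have phi_ge n : (n <= phi n)%N.
  by elim: n => // n IHn; apply: leq_ltn_trans IHn (phi_incr _ _ _).
have hw_gt0 : 0 < h w := h_gt0 w Kw.
set delta := h w / (2 * (L + 1)).
have delta_gt0 : 0 < delta by rewrite divr_gt0 // mulr_gt0 //; lra.
have [N _ near_w] := cvgr_lt 0 dE_cvg delta delta_gt0.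
set n := maxn N (Num.truncn (2 / h w)).
have [Ku hu_lt] := uP (phi n).
have dE_lt : dE (u (phi n)) w < delta by apply: near_w; rewrite /= leq_maxl.
have inv_lt : (phi n).+1%:R^-1 < h w / 2.
  rewrite invf_plt ?posrE ?divr_gt0 // invf_div.
  apply: lt_le_trans (truncnS_gt _) _; rewrite ler_nat ltnS.
  exact: leq_trans (leq_maxr N _) (phi_ge n).
have L_delta : L * delta < h w / 2.
  rewrite /delta mulrA ltr_pdivrMr ?mulr_gt0 //; last by lra.
  by have := mulr_gt0 hw_gt0 hw_gt0; nra.
have := h_lip _ _ Ku Kw; rewrite distrC ler_norml => /andP[_].
have := ler_wpM2l L_ge0 (ltW dE_lt); have := lt_trans hu_lt inv_lt; move: L_delta; lra.
Qed.

Lemma LC_compact_bound (K : set V) : K `<=` @LC R -> dE_compact K ->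
  exists2 M : R, 1 <= M & forall w, K w -> sqnorm w <= M * - qfr w.
Proof.
move=> KL Kc.
have [|||e e_gt0 e_le] := @dE_compact_pos_lb K (fun w => - (qfr w / sqnorm w)) 3 Kc.
- by [].
- move=> u w /KL[u_neq0 _] /KL[w_neq0 _]; rewrite opprK addrC distrC.
  exact: qfr_ratio_lipschitz.
- move=> w /KL[w_neq0 /qfr_lt0 q_lt0].
  by rewrite oppr_gt0 pmulr_llt0 ?invr_gt0 ?sqnorm_gt0.
exists (1 + e^-1) => [|w Kw]; first by rewrite lerDl invr_ge0 ltW.
have [w_neq0 /qfr_lt0 q_lt0] := KL w Kw; have w_gt0 := sqnorm_gt0 w_neq0.
have es_le : e * sqnorm w <= - qfr w.
  by move: (e_le w Kw); rewrite -mulNr ler_pdivlMr.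
have einv_ge0 : 0 <= e^-1 by rewrite invr_ge0 ltW.
have := ler_wpM2l einv_ge0 es_le; rewrite mulrA mulVf ?gt_eqF // mul1r.
by move: q_lt0; nra.
Qed.

End CompactBound.

Theorem lemma5p9 (R : realType) (K : set 'rV[R[i]]_3) :
  K `<=` @LC R -> dE_compact K ->
  (forall x w, @S3 R x -> K w ->
     dist_to (@dE R) x (perp w) = modc (herm x w) / (normv x * normv w)) /\
  exists2 C : R, 1 <= C &
    forall x w, @S3 R x -> K w ->
      [/\ C^-1 * dist_to (@dE R) x (perp w) <= dist_to (@dE R) x (chain w),
          dist_to (@dE R) x (chain w) <= C * dist_to (@dE R) x (perp w),
          C^-1 * dist_to (@dE R) x (chain w) <= dist_to (@dvis R) x (chain w)
        & dist_to (@dvis R) x (chain w) <= C * dist_to (@dE R) x (chain w)].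
Proof.
move=> KL Kc; split=> [x w Sx /KL Lw|]; first exact: dist_to_perp.
have [M M_ge1 w_bound] := LC_compact_bound KL Kc.
exists (4 * M) => [|x w Sx /[dup] Kw /KL Lw]; first lra.
have [y Ly [dE_le dvis_le]] := exists_near_chain_point M_ge1 Sx Lw (w_bound w Kw).
have chain_neq0 : chain w !=set0 by exists y.
have perp_le := le_dist_to_subset (@dE_ge0 R) x (@subIsetl _ (perp w) (@S3 R)) chain_neq0.
have dE_chain_le := le_trans (dist_to_le (@dE_ge0 R) x Ly) dE_le.
have dvis_chain_le := le_trans (dist_to_le (@dvis_ge0 R) x Ly) dvis_le.
have dE_dvis : dist_to (@dE R) x (chain w) <= 2 * dist_to (@dvis R) x (chain w).
  by apply: dist_to_le_scale => // [u v|z Lz]; [exact: dE_ge0 | exact: dE_le_2dvis Sx Lz.2].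
have perp_ge0 := dist_to_ge0 (@dE_ge0 R) x (perp w).
have chain_ge0 := dist_to_ge0 (@dE_ge0 R) x (chain w).
rewrite -(dist_to_perp Sx Lw) in dE_chain_le dvis_chain_le.
have C_gt0 : 0 < 4 * M by lra.
have dvis_ge0 := dist_to_ge0 (@dvis_ge0 R) x (chain w).
rewrite !ler_pdivrMl //; split; nra.
Qed.
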